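(* Let $A$ be a finite set, let $C$ and $D$ be total clones on $A$ with $D \subseteq C$, let $T\subseteq P_A$ be a strong partial class, and let $I \subseteq \mathcal{I}_{\mathrm{str}}(C)$, such that: (i) $T \cap O_A \subseteq D$; (ii) $T \star \mathrm{Str}(D) \subseteq \mathrm{Str}(D) \cup T$ and $\mathrm{Str}(D) \star T \subseteq \mathrm{Str}(D) \cup T$; (iii) $X \cap T \neq Y \cap T$ for all $X,Y \in I$ with $X \neq Y$. Then $|\mathcal{I}_{\mathrm{str}}(D)| \geq |I|$.
   Context: A partial function of arity $n$ on $A$ is a map $f:\operatorname{dom} f\to A$ with $\operatorname{dom} f\subseteq A^n$; total if $\operatorname{dom} f=A^n$. $P_A$ is the set of all partial functions, $O_A$ the set of total ones. Composition $F=f(g_1,\dots,g_n)$ is given by $F(\mathbf{x})=f(g_1(\mathbf{x}),\dots,g_n(\mathbf{x}))$ on $\operatorname{dom} F=\{\mathbf{x}\in\bigcap_i\operatorname{dom} g_i : (g_1(\mathbf{x}),\dots,g_n(\mathbf{x}))\in\operatorname{dom} f\}$. A partial clone is a composition-closed subset of $P_A$ containing all projections; a total clone is one contained in $O_A$. $f\le g$ means $\operatorname{dom} f\subseteq \operatorname{dom} g$ and $f=g$ on $\operatorname{dom} f$; $\mathrm{Str}(X)=\{f\in P_A:\exists g\in X,\ f\le g\}$, and $X$ is strong if $X=\mathrm{Str}(X)$. For a total clone $C$, $\mathcal{I}_{\mathrm{str}}(C)$ is the set of strong partial clones $X$ with $X\cap O_A=C$. For $f$ $n$-ary and $g$ $m$-ary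 define: $(\zeta f)(x_1,\dots,x_n)=f(x_2,\dots,x_n,x_1)$; $(\tau f)(x_1,\dots,x_n)=f(x_2,x_1,x_3,\dots,x_n)$; $(\Delta f)(x_1,\dots,x_{n-1})=f(x_1,x_1,x_2,\dots,x_{n-1})$ (with $\zeta f=\tau f=\Delta f=f$ if $n=1$); $(\nabla f)(x_1,\dots,x_{n+1})=f(x_2,\dots,x_{n+1})$; $(f\star g)(x_1,\dots,x_{n+m-1})=f(g(x_1,\dots,x_m),x_{m+1},\dots,x_{n+m-1})$, with domains given by the composition rule. A partial class is a subset of $P_A$ closed under $\star,\zeta,\tau,\nabla,\Delta$; it is strong if it equals its $\mathrm{Str}$. For $X,Y\subseteq P_A$, $X\star Y=\{f\star g: f\in X, g\in Y\}$. *)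

From mathcomp Require Import all_boot.
Set Implicit Arguments. Unset Strict Implicit. Unset Printing Implicit Defensive.

Section PartialFunctions.
Variable A : finType.

(* A partial function of arity (pa f).+1 : arities are >= 1.
   dom f = { x | pf f x <> None }. *)
Record pfun := PFun { pa : nat; pf : (pa.+1).-tuple A -> option A }.
Arguments pf : clear implicits.

Definition arity (f : pfun) : nat := (pa f).+1.

Definition pset := pfun -> Prop.

Definition ptotal (f : pfun) : Prop := forall x, pf f x <> None.

Definition proj (n : nat) (i : 'I_n.+1) : pfun :=
  @PFun n (fun x => Some (tnth x i)).

Definition pcomp_raw (n m : nat) (f : n.+1.-tuple A -> option A)
  (g : 'I_n.+1 -> m.+1.-tuple A -> option A) : m.+1.-tuple A -> option A :=
  fun x => if [forall i, g i x != None]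
           then f [tuple odflt (thead x) (g i x) | i < n.+1]
           else None.

Definition partial_clone (X : pset) : Prop :=
  (forall n (i : 'I_n.+1), X (proj i)) /\
  (forall n m (f : n.+1.-tuple A -> option A)
          (g : 'I_n.+1 -> m.+1.-tuple A -> option A),
      X (PFun f) -> (forall i, X (PFun (g i))) -> X (PFun (pcomp_raw f g))).

Definition total_clone (X : pset) : Prop :=
  partial_clone X /\ (forall f, X f -> ptotal f).

Definition le_raw (n : nat) (f g : n.+1.-tuple A -> option A) : Prop :=
  forall x, f x <> None -> g x = f x.

Definition ple (f g : pfun) : Prop :=
  exists n (f' g' : n.+1.-tuple A -> option A),
    f = PFun f' /\ g = PFun g' /\ le_raw f' g'.

Definition Str (X : pset) : pset := fun f => exists2 g, X g & ple f g.

Definition strong (X : pset) : Prop := X = Str X.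

Definition Istr (C : pset) : pset -> Prop :=
  fun X => partial_clone X /\ strong X /\ (fun f => X f /\ ptotal f) = C.

Definition zeta (f : pfun) : pfun :=
  @PFun (pa f) (fun x => pf f [tuple tnth x (ordS i) | i < (pa f).+1]).

Definition tau_idx (n : nat) (i : 'I_n.+1) : 'I_n.+1 :=
  if val i == 0 then inord 1 else if val i == 1 then inord 0 else i.

Definition tau (f : pfun) : pfun :=
  @PFun (pa f) (fun x => pf f [tuple tnth x (tau_idx i) | i < (pa f).+1]).

Definition nabla (f : pfun) : pfun :=
  @PFun (pa f).+1
    (fun x => pf f [tuple tnth x (lift ord0 i) | i < (pa f).+1]).

Definition Delta (f : pfun) : pfun :=
  match f with
  | @PFun 0 g => @PFun 0 g
  | @PFun n.+1 g =>
      @PFun n (fun x => g [tuple tnth x (inord i.-1) | i < n.+2])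
  end.

(* (f * g)(x_1..x_{n+m-1}) = f(g(x_1..x_m), x_{m+1}, ..., x_{n+m-1}) *)
Definition star (f g : pfun) : pfun :=
  @PFun (pa f + pa g)
    (fun x =>
       match pf g [tuple tnth x (inord i) | i < (pa g).+1] with
       | None => None
       | Some y =>
           pf f [tuple if val i == 0 then y else tnth x (inord (pa g + i))
                | i < (pa f).+1]
       end).

Definition partial_class (X : pset) : Prop :=
  (forall f g, X f -> X g -> X (star f g)) /\
  (forall f, X f -> X (zeta f)) /\
  (forall f, X f -> X (tau f)) /\
  (forall f, X f -> X (nabla f)) /\
  (forall f, X f -> X (Delta f)).

Definition strong_partial_class (X : pset) : Prop :=
  partial_class X /\ strong X.

Definition card_ge (J I : pset -> Prop) : Prop :=
  exists phi : pset -> pset,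
    (forall X, I X -> J (phi X)) /\
    (forall X Y, I X -> I Y -> phi X = phi Y -> X = Y).

End PartialFunctions.

(* Let U := Str(D) u T.  Both Str(D) and T are partial classes, and (ii) makes
   their union closed under star, so U is a strong partial class containing the
   projections.  Such a class is a partial clone: the class operations generate
   every minor f(x_(s 0), ..., x_(s n)) (permutations from the cycle and one
   transposition, then adding and identifying variables), and f(g_0, ..., g_n)
   is built by plugging in one g_i at a time with star and identifying the
   copies of the variables.  Then X |-> X n U maps I_str(C) into I_str(D): its
   total part is D by (i), since X contains C, which contains D.  Finally X n T
   is recovered from X n U because T is contained in U, so the map is
   injective on I by (iii). *)

From mathcomp Require Import all_boot.
From mathcomp Require Import fingroup perm.
From mathcomp Require Import zify.
From Stdlib Require Import FunctionalExtensionality PropExtensionality Classical.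
From Stdlib Require Import Eqdep_dec PeanoNat.
Set Implicit Arguments. Unset Strict Implicit. Unset Printing Implicit Defensive.

Section Minors.
Variable A : finType.

Definition minor n k (f : n.+1.-tuple A -> option A) (s : 'I_n.+1 -> 'I_k.+1) :
  k.+1.-tuple A -> option A :=
  fun x => f [tuple tnth x (s i) | i < n.+1].

Lemma eq_minor n k (f : n.+1.-tuple A -> option A) (a b : 'I_n.+1 -> 'I_k.+1) :
  a =1 b -> minor f a = minor f b.
Proof.
move=> eab; apply: functional_extensionality => x; rewrite /minor; congr f.
by apply: eq_from_tnth => i; rewrite !tnth_map !tnth_ord_tuple eab.
Qed.

Lemma minor_id n (f : n.+1.-tuple A -> option A) : minor f id = f.
Proof.
apply: functional_extensionality => x; rewrite /minor; congr f.
by apply: eq_from_tnth => i; rewrite tnth_map tnth_ord_tuple.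
Qed.

Lemma minor_comp n k l (f : n.+1.-tuple A -> option A) (a : 'I_n.+1 -> 'I_k.+1)
    (b : 'I_k.+1 -> 'I_l.+1) :
  minor (minor f a) b = minor f (b \o a).
Proof.
apply: functional_extensionality => x; rewrite /minor; congr f.
by apply: eq_from_tnth => i; rewrite !(tnth_map, tnth_ord_tuple).
Qed.

Section ClassMinors.
Variable S : pset A.
Hypothesis S_class : partial_class S.

Definition minor_stable n k (s : 'I_n.+1 -> 'I_k.+1) : Prop :=
  forall f, S (PFun f) -> S (PFun (minor f s)).

Lemma minor_stable_eq n k (a b : 'I_n.+1 -> 'I_k.+1) :
  minor_stable a -> a =1 b -> minor_stable b.
Proof. by move=> Sa eab f Sf; rewrite -(eq_minor f eab); apply: Sa. Qed.

Lemma minor_stable_id n : minor_stable (@id 'I_n.+1).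
Proof. by move=> f; rewrite minor_id. Qed.

Lemma minor_stable_comp n k l (a : 'I_n.+1 -> 'I_k.+1) (b : 'I_k.+1 -> 'I_l.+1) :
  minor_stable a -> minor_stable b -> minor_stable (b \o a).
Proof. by move=> Sa Sb f Sf; rewrite -minor_comp; apply/Sb/Sa. Qed.

Lemma minor_stable_ordS n : minor_stable (@ordS n.+1).
Proof. by move=> f; apply: (proj1 (proj2 S_class) (PFun f)). Qed.

Lemma minor_stable_tau n : minor_stable (@tau_idx n).
Proof. by move=> f; apply: (proj1 (proj2 (proj2 S_class)) (PFun f)). Qed.

Lemma minor_stable_lift n : minor_stable (lift (@ord0 n.+1)).
Proof. by move=> f; apply: (proj1 (proj2 (proj2 (proj2 S_class))) (PFun f)). Qed.

Lemma minor_stable_Delta n :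
  minor_stable (fun i : 'I_n.+2 => inord i.-1 : 'I_n.+1).
Proof. by move=> f; apply: (proj2 (proj2 (proj2 (proj2 S_class))) (PFun f)). Qed.

Local Open Scope group_scope.

Lemma minor_stableM n (s t : {perm 'I_n.+1}) :
  minor_stable s -> minor_stable t -> minor_stable (s * t).
Proof.
by move=> Ss St; apply: (minor_stable_eq (minor_stable_comp Ss St)) => i; rewrite permM.
Qed.

Lemma minor_stable1 n : minor_stable (1 : {perm 'I_n.+1}).
Proof. by apply: (minor_stable_eq (@minor_stable_id n)) => i; rewrite perm1. Qed.

Lemma minor_stableX n (s : {perm 'I_n.+1}) k :
  minor_stable s -> minor_stable (s ^+ k).
Proof.
move=> Ss; elim: k => [|k IHk]; first exact: minor_stable1.
by rewrite expgS; apply: minor_stableM.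
Qed.

Lemma minor_stableV n (s : {perm 'I_n.+1}) :
  minor_stable s -> minor_stable s^-1.
Proof. by move=> Ss; rewrite invg_expg; apply: minor_stableX. Qed.

Lemma minor_stableJ n (s t : {perm 'I_n.+1}) :
  minor_stable s -> minor_stable t -> minor_stable (s ^ t).
Proof.
by move=> Ss St; rewrite conjgE; apply/minor_stableM/minor_stableM => //; apply: minor_stableV.
Qed.

Definition cycle_perm n : {perm 'I_n.+1} := perm (@ordS_inj n.+1).

Lemma minor_stable_cycle n : minor_stable (cycle_perm n).
Proof. by apply: (minor_stable_eq (@minor_stable_ordS n)) => i; rewrite permE. Qed.

Lemma minor_stable_tperm01 n : minor_stable (tperm (ord0 : 'I_n.+2) (inord 1)).
Proof.
apply: (minor_stable_eq (@minor_stable_tau n.+1)) => i.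
have val1 : (inord 1 : 'I_n.+2) = 1%N :> nat by rewrite inordK.
rewrite /tau_idx; case: tpermP => [->|->|ne0 ne1]; first by [].
  by apply: val_inj; rewrite /= val1 inordK.
have /negbTE-> : val i != 0%N by apply/eqP => i0; apply/ne0/val_inj.
by have /negbTE-> : val i != 1%N by apply/eqP => i1; apply/ne1/val_inj; rewrite /= val1.
Qed.

(* Conjugating (0 j) by the cycle gives (1 j+1), and then by (0 1) gives (0 j+1). *)
Lemma minor_stable_tperm0 n j : (0 < j <= n.+1)%N ->
  minor_stable (tperm (ord0 : 'I_n.+2) (inord j)).
Proof.
elim: j => [//|[|j] IHj] /andP[_ lej]; first exact: minor_stable_tperm01.
have := minor_stableJ (minor_stableJ (IHj (leqW lej)) (@minor_stable_cycle n.+1))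
                      (@minor_stable_tperm01 n).
have cyc0 : cycle_perm n.+1 ord0 = inord 1.
  by apply: val_inj; rewrite permE /= inordK // modn_small.
have cycj : cycle_perm n.+1 (inord j.+1) = inord j.+2.
  by apply: val_inj; rewrite permE /= !inordK ?modn_small //; lia.
rewrite !tpermJ cyc0 cycj tpermR tpermD //;
  by apply/eqP => /(congr1 val) /=; rewrite !inordK //; lia.
Qed.

Lemma minor_stable_tperm n (x y : 'I_n.+1) : minor_stable (tperm x y).
Proof.
have [->|nexy] := eqVneq x y; first by rewrite tperm1; apply: minor_stable1.
case: n x y nexy => [|n] x y nexy; first by rewrite !ord1 eqxx in nexy.
have tperm0 (z : 'I_n.+2) : minor_stable (tperm ord0 z).
  have [->|nez] := eqVneq z ord0; first by rewrite tperm1; apply: minor_stable1.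
  rewrite -(inord_val z); apply: minor_stable_tperm0.
  rewrite -[(z <= n.+1)%N]ltnS ltn_ord andbT lt0n.
  by apply/eqP => z0; rewrite (_ : z = ord0) ?eqxx // in nez; apply: val_inj.
have [->|nex] := eqVneq x ord0; first exact: tperm0.
have [->|ney] := eqVneq y ord0; first by rewrite tpermC; apply: tperm0.
have := minor_stableJ (tperm0 y) (tperm0 x).
by rewrite tpermJ tpermL tpermD // eq_sym.
Qed.

Lemma minor_stable_perm n (s : {perm 'I_n.+1}) : minor_stable s.
Proof.
have [ts -> _] := prod_tpermP s; elim: ts => [|t ts IHts].
  by rewrite big_nil; apply: minor_stable1.
by rewrite big_cons; apply/minor_stableM/IHts/minor_stable_tperm.
Qed.

Lemma lift0_inord_pred n (i : 'I_n.+2) :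
  i != ord0 -> lift ord0 (inord i.-1 : 'I_n.+1) = i.
Proof.
move=> nei0; have i_gt0 : (0 < i)%N.
  by rewrite lt0n; apply/eqP => i0; rewrite (_ : i = ord0) ?eqxx // in nei0; apply: val_inj.
have lti := ltn_ord i.
by apply: val_inj; rewrite /= /bump /= add1n inordK ?prednK //; lia.
Qed.

Lemma nonsurj_factor n k (s : 'I_n.+1 -> 'I_k.+2) y : (forall x, s x != y) ->
  exists p : {perm 'I_k.+2}, exists s' : 'I_n.+1 -> 'I_k.+1,
    forall x, s x = p (lift ord0 (s' x)).
Proof.
move=> s_miss; exists (tperm ord0 y), (fun x => inord (tperm ord0 y (s x)).-1).
move=> x; rewrite lift0_inord_pred ?tpermK //.
have := s_miss x; case: tpermP => [->|->|/eqP //]; first by rewrite eq_sym.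
by rewrite eqxx.
Qed.

Lemma noninj_factor n k (s : 'I_n.+2 -> 'I_k.+1) i j : i != j -> s i = s j ->
  exists r : {perm 'I_n.+2}, forall x, s x = s (r (lift ord0 (inord (r^-1 x).-1))).
Proof.
move=> neij sij; pose r := tperm ord0 i * tperm (tperm ord0 i (inord 1)) j.
have r1 : r (inord 1) = j by rewrite permM tpermL.
have r0 : r ord0 = i.
  rewrite permM tpermL tpermD 1?eq_sym //.
  apply/eqP => /(congr1 (tperm ord0 i)); rewrite tpermR tpermK.
  by move=> /(congr1 val); rewrite /= inordK.
exists r => x; have [rx0|nerx0] := eqVneq (r^-1 x) ord0.
  have -> : lift ord0 (inord (r^-1 x).-1 : 'I_n.+1) = inord 1.
    by apply: val_inj; rewrite rx0 /= /bump /= !inordK.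
  by rewrite r1 -sij -r0 -rx0 permKV.
by rewrite lift0_inord_pred // permKV.
Qed.

(* Induction on n + k: a map missing some value factors through [lift ord0],
   a bijection is a permutation, and a non-injective map factors through the
   identification of the first two variables. *)
Lemma minor_stable_all n k (s : 'I_n.+1 -> 'I_k.+1) : minor_stable s.
Proof.
have [N ltN] : exists N, (n + k < N)%N by exists (n + k).+1.
elim: N n k s ltN => // N IHN n k s ltN.
case: (boolP [exists y, [forall x, s x != y]]) =>
  [/existsP[y /forallP s_miss]|/existsPn s_surj].
  case: k s ltN y s_miss => [|k] s ltN y s_miss.
    by have := s_miss ord0; rewrite !ord1 eqxx.
  have [p [s' es]] := nonsurj_factor s_miss.
  apply: (minor_stable_eq (minor_stable_comp (minor_stable_comp (IHN n k s' _)
    (@minor_stable_lift k)) (minor_stable_perm p))) => [|x]; [lia | exact/esym/es].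
case: (boolP (injectiveb s)) => [/injectiveP s_inj|/injectivePn[i [j neij sij]]].
  have le_nk := leq_card _ s_inj; rewrite !card_ord in le_nk.
  have le_kn : (#|'I_k.+1| <= #|'I_n.+1|)%N.
    rewrite -(card_codom s_inj); apply/subset_leq_card/subsetP => y _.
    by have /forallPn[x /negbNE/eqP <-] := s_surj y; apply: codom_f.
  rewrite !card_ord in le_kn; have ekn : k = n by lia.
  subst k; apply: (minor_stable_eq (minor_stable_perm (perm s_inj))) => x.
  by rewrite permE.
case: n s ltN s_surj i j neij sij => [|n] s ltN _ i j neij sij.
  by rewrite !ord1 eqxx in neij.
have [r er] := noninj_factor neij sij.
apply: (minor_stable_eq (minor_stable_comp (minor_stable_comp (minor_stable_perm r^-1)
  (@minor_stable_Delta n)) (IHN n k (s \o r \o lift ord0) _))) => [|x]; [lia | exact/esym/er].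
Qed.

Lemma nat_of_inord l a : @inord l a = (if (a < l.+1)%N then a else 0%N) :> nat.
Proof.
by rewrite /inord /insubd; case: insubP => [u -> -> /=|/negbTE->].
Qed.

Ltac case_ifs := repeat match goal with |- context [if ?b then _ else _] =>
  lazymatch b with context [if _ then _ else _] => fail | _ =>
    case: (boolP b) => ?; rewrite /= end end.

Section Composition.
Variables (n m : nat) (f : n.+1.-tuple A -> option A)
  (g : 'I_n.+1 -> m.+1.-tuple A -> option A).

Definition prefix r (y : (r + m).+1.-tuple A) : m.+1.-tuple A :=
  [tuple tnth y (inord i) | i < m.+1].

Definition prefix_defined r (y : (r + m).+1.-tuple A) : bool :=
  [forall i : 'I_n.+1, (i < n.+1 - r)%N ==> (g i (prefix y) != None)].

(* [subst_prefix r] is [f(g_0(x), ..., g_(n-r)(x), z_1, ..., z_r)] in the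
   variables [x_0, ..., x_m, z_1, ..., z_r]: the first [n.+1 - r] arguments of
   [f] are substituted, the last [r] are still free. *)
Definition subst_prefix r (y : (r + m).+1.-tuple A) : option A :=
  if prefix_defined y then
    f [tuple if (i < n.+1 - r)%N then odflt (thead y) (g i (prefix y))
             else tnth y (inord (m.+1 + i - (n.+1 - r))) | i < n.+1]
  else None.

Lemma subst_prefix_none :
  subst_prefix (r := n.+1) = minor f (fun i => inord (m.+1 + i)).
Proof.
apply: functional_extensionality => y; rewrite /subst_prefix /minor.
have -> : prefix_defined y by apply/forallP => i; rewrite subnn.
by congr f; apply: eq_from_tnth => i; rewrite !(tnth_map, tnth_ord_tuple) subnn /= subn0.
Qed.

Lemma prefix0 (y : (0 + m).+1.-tuple A) : prefix y = y.
Proof.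
apply: eq_from_tnth => i; rewrite /prefix !(tnth_map, tnth_ord_tuple).
by congr tnth; apply: val_inj; rewrite /= inordK.
Qed.

Lemma subst_prefix_all : subst_prefix (r := 0) = pcomp_raw f g.
Proof.
apply: functional_extensionality => y.
rewrite /subst_prefix /pcomp_raw /prefix_defined prefix0.
have -> : [forall i : 'I_n.+1, (i < n.+1 - 0)%N ==> (g i y != None)] =
          [forall i, g i y != None].
  by apply: eq_forallb => i; rewrite subn0 ltn_ord.
case: ifP => // _; congr f; apply: eq_from_tnth => i.
by rewrite !(tnth_map, tnth_ord_tuple) subn0 ltn_ord.
Qed.

Lemma prefix_defined_succ r (u : (r.+1 + m).+1.-tuple A) (y : (r + m).+1.-tuple A) :
  (r < n.+1)%N -> prefix u = prefix y -> g (inord (n - r)) (prefix y) != None ->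
  prefix_defined u = prefix_defined y.
Proof.
move=> lt_r_n prefix_u def_gj; rewrite /prefix_defined prefix_u subSS.
apply/forallP/forallP => def_y i; move/implyP: (def_y i) (ltn_ord i) => def_yi lt_i.
  apply/implyP => lt_ir; have [lt_ij|ge_ij] := ltnP i (n - r); first exact: def_yi.
  by rewrite (_ : i = inord (n - r)) //; apply: val_inj; rewrite /= inordK; lia.
by apply/implyP => lt_ir; apply: def_yi; lia.
Qed.

(* One more argument, the one of index [n - r], is substituted by [g_(n-r)]:
   move the free variable [z_1] in front, plug [g_(n-r)] into it with [star],
   and identify the two copies of [x_0, ..., x_m]. *)
Lemma subst_prefix_step r : (r < n.+1)%N ->
  let mu (p : 'I_(r.+1 + m).+1) : 'I_(r.+1 + m).+1 :=
    inord (if (p < m.+1)%N then p.+1 else if p == m.+1 :> nat then 0 else p) in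
  let nu (p : 'I_(r.+1 + m + m).+1) : 'I_(r + m).+1 :=
    inord (if (p < m.+1)%N then p : nat else p - m.+1) in
  subst_prefix (r := r) =
  minor (@pf A (star (PFun (minor (subst_prefix (r := r.+1)) mu))
                  (PFun (g (inord (n - r)))))) nu.
Proof.
move=> lt_r_n mu nu; apply: functional_extensionality => y; rewrite /minor /=.
set j : 'I_n.+1 := inord (n - r).
have val_j : j = n - r :> nat by rewrite inordK //; lia.
have -> : [tuple tnth [tuple tnth y (nu i) | i < (r.+1 + m + m).+1] (inord i) | i < m.+1]
          = prefix y.
  apply: eq_from_tnth => i; rewrite /prefix !(tnth_map, tnth_ord_tuple).
  have lt_i := ltn_ord i; congr tnth; apply: val_inj => /=.
  by rewrite /nu !nat_of_inord; case_ifs; lia.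
rewrite /subst_prefix.
case gj: (g j (prefix y)) => [z|]; last first.
  have -> // : prefix_defined y = false.
  by apply/negbTE/forallPn; exists j; rewrite gj /= implybF negbK val_j; lia.
set u := [tuple tnth _ (mu _) | _ < _].
have tnth_u (p : 'I_(r.+1 + m).+1) : tnth u p =
    if (p < m.+1)%N then tnth y (inord p)
    else if p == m.+1 :> nat then z else tnth y (inord p.-1).
  have lt_p := ltn_ord p; rewrite /u !(tnth_map, tnth_ord_tuple) /mu !nat_of_inord.
  case_ifs; try lia; try reflexivity;
    by congr tnth; apply: val_inj => /=; rewrite /nu !nat_of_inord; case_ifs; lia.
clearbody u.
have prefix_u : prefix u = prefix y.
  apply: eq_from_tnth => i; rewrite /prefix !(tnth_map, tnth_ord_tuple) tnth_u.
  have lt_i := ltn_ord i; rewrite !nat_of_inord; case_ifs; try lia.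
  by congr tnth; apply: val_inj => /=; rewrite !nat_of_inord; case_ifs; lia.
rewrite (prefix_defined_succ lt_r_n prefix_u) ?gj //.
case: ifP => // /forallP def_y; congr f.
apply: eq_from_tnth => i; rewrite !(tnth_map, tnth_ord_tuple) subSS tnth_u.
have lt_in := ltn_ord i; move/implyP: (def_y i) => def_yi.
have [lt_ij|ge_ij] := ltnP i (n - r).
  have lt_ir : (i < n.+1 - r)%N by lia.
  by rewrite lt_ir prefix_u; move: (def_yi lt_ir); case: (g i (prefix y)).
rewrite (_ : (i < n.+1 - r)%N = (i == n - r :> nat)); last by apply/idP/eqP; lia.
case: eqP => [e_ij|ne_ij].
  rewrite (_ : i = j) ?gj /=; last by apply: val_inj; rewrite /= val_j.
  by rewrite !nat_of_inord; case_ifs; try lia.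
rewrite !nat_of_inord; case_ifs; try lia.
by congr tnth; apply: val_inj => /=; rewrite !nat_of_inord; case_ifs; lia.
Qed.

Lemma partial_class_pcomp :
  S (PFun f) -> (forall i, S (PFun (g i))) -> S (PFun (pcomp_raw f g)).
Proof.
move=> Sf Sg.
suff /(_ n.+1 (leqnn _)) :
    forall d, (d <= n.+1)%N -> S (PFun (subst_prefix (r := n.+1 - d))).
  by rewrite subnn subst_prefix_all.
elim=> [_|d IHd lt_dn]; first by rewrite subn0 subst_prefix_none; apply: minor_stable_all.
rewrite (subst_prefix_step (_ : n.+1 - d.+1 < n.+1)%N); last by lia.
apply/minor_stable_all/(proj1 S_class) => //; apply: minor_stable_all.
by rewrite (_ : (n.+1 - d.+1).+1 = n.+1 - d); [apply: IHd; lia | lia].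
Qed.

End Composition.

End ClassMinors.
End Minors.

Section StrongClasses.
Variable A : finType.
Implicit Types (X Y : pset A) (F G H : pfun A).

Lemma pset_ext X Y : (forall F, X F <-> Y F) -> X = Y.
Proof.
move=> XY; apply: functional_extensionality => F.
exact: propositional_extensionality (XY F).
Qed.

Lemma PFun_inj n (f g : n.+1.-tuple A -> option A) : PFun f = PFun g -> f = g.
Proof.
move/(congr1 (fun F => existT (fun k => k.+1.-tuple A -> option A) (pa F) (@pf A F))).
exact: Eqdep_dec.inj_pair2_eq_dec PeanoNat.Nat.eq_dec _ _ _ _.
Qed.

Lemma ple_refl F : ple F F.
Proof. by case: F => n f; exists n, f, f. Qed.

Lemma ple_trans F G H : ple F G -> ple G H -> ple F H.
Proof.
move=> [n [f [g [-> [-> le_fg]]]]] [n' [g' [h [eG [-> le_gh]]]]].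
have en : n' = n by have := congr1 (@pa A) eG.
subst n'; move/PFun_inj: eG => <- in le_gh.
by exists n, f, h; split; [|split] => // x fx; rewrite le_gh le_fg.
Qed.

Lemma ple_total F G : ple F G -> ptotal F -> G = F.
Proof.
move=> [n [f [g [-> [-> le_fg]]]]] tot_f; congr PFun.
by apply: functional_extensionality => x; apply/le_fg/tot_f.
Qed.

Lemma Str_sub X F : X F -> Str X F.
Proof. by exists F => //; apply: ple_refl. Qed.

Lemma strong_Str X : strong (Str X).
Proof.
apply: pset_ext => F; split; first exact: Str_sub.
by move=> [G [H XH le_GH] le_FG]; exists H => //; apply: ple_trans le_FG le_GH.
Qed.

Lemma strong_le X F G : strong X -> ple F G -> X G -> X F.
Proof. by move=> sX le_FG XG; rewrite sX; exists G. Qed.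

Lemma strongI X Y : strong X -> strong Y -> strong (fun F => X F /\ Y F).
Proof.
move=> sX sY; apply: pset_ext => F; split; first exact: Str_sub.
move=> [G [XG YG] le_FG].
by split; [apply: strong_le sX le_FG XG | apply: strong_le sY le_FG YG].
Qed.

Lemma strongU X Y : strong X -> strong Y -> strong (fun F => X F \/ Y F).
Proof.
move=> sX sY; apply: pset_ext => F; split; first exact: Str_sub.
move=> [G [XG|YG] le_FG].
  by left; apply: strong_le sX le_FG XG.
by right; apply: strong_le sY le_FG YG.
Qed.

Lemma ple_minor n k (f g : n.+1.-tuple A -> option A) (s : 'I_n.+1 -> 'I_k.+1) :
  le_raw f g -> ple (PFun (minor f s)) (PFun (minor g s)).
Proof.
by move=> le_fg; exists k, (minor f s), (minor g s); split; [|split] => // x /le_fg.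
Qed.

Lemma ple_zeta F G : ple F G -> ple (zeta F) (zeta G).
Proof. by move=> [n [f [g [-> [-> /(ple_minor (@ordS n.+1))]]]]]. Qed.

Lemma ple_tau F G : ple F G -> ple (tau F) (tau G).
Proof. by move=> [n [f [g [-> [-> /(ple_minor (@tau_idx n))]]]]]. Qed.

Lemma ple_nabla F G : ple F G -> ple (nabla F) (nabla G).
Proof. by move=> [n [f [g [-> [-> /(ple_minor (lift (@ord0 n.+1)))]]]]]. Qed.

Lemma ple_Delta F G : ple F G -> ple (Delta F) (Delta G).
Proof.
move=> [[|n] [f [g [-> [-> le_fg]]]]]; first by exists 0, f, g.
exact: (ple_minor (fun i : 'I_n.+2 => inord i.-1 : 'I_n.+1)).
Qed.

Lemma ple_star F F' G G' : ple F F' -> ple G G' -> ple (star F G) (star F' G').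
Proof.
move=> [n [f [f' [-> [-> le_f]]]]] [m [g [g' [-> [-> le_g]]]]].
exists (n + m), (@pf A (star (PFun f) (PFun g))), (@pf A (star (PFun f') (PFun g'))).
split; [|split] => // x /=; case eg: (g _) => [y|] // fy.
by rewrite le_g ?eg // le_f.
Qed.

Lemma Str_class X : partial_class X -> partial_class (Str X).
Proof.
move=> [Xstar [Xzeta [Xtau [Xnabla XDelta]]]].
split.
  move=> F G [F' XF' le_F] [G' XG' le_G].
  by exists (star F' G'); [apply: Xstar | apply: ple_star].
split; first by move=> F [G XG le_FG]; exists (zeta G); [apply: Xzeta | apply: ple_zeta].
split; first by move=> F [G XG le_FG]; exists (tau G); [apply: Xtau | apply: ple_tau].
split; first by move=> F [G XG le_FG]; exists (nabla G); [apply: Xnabla | apply: ple_nabla].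
by move=> F [G XG le_FG]; exists (Delta G); [apply: XDelta | apply: ple_Delta].
Qed.

Lemma partial_classU X Y : partial_class X -> partial_class Y ->
  (forall F G, X F -> Y G -> X (star F G) \/ Y (star F G)) ->
  (forall F G, Y F -> X G -> X (star F G) \/ Y (star F G)) ->
  partial_class (fun F => X F \/ Y F).
Proof.
move=> [Xstar [Xzeta [Xtau [Xnabla XDelta]]]] [Ystar [Yzeta [Ytau [Ynabla YDelta]]]] XY YX.
split.
  move=> F G [XF|YF] [XG|YG]; [left | exact: XY | exact: YX | right].
    exact: Xstar.
  exact: Ystar.
split; first by move=> F [XF|YF]; [left; apply: Xzeta | right; apply: Yzeta].
split; first by move=> F [XF|YF]; [left; apply: Xtau | right; apply: Ytau].
split; first by move=> F [XF|YF]; [left; apply: Xnabla | right; apply: Ynabla].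
by move=> F [XF|YF]; [left; apply: XDelta | right; apply: YDelta].
Qed.

Lemma partial_clone_minor X n k (f : n.+1.-tuple A -> option A) (s : 'I_n.+1 -> 'I_k.+1) :
  partial_clone X -> X (PFun f) -> X (PFun (minor f s)).
Proof.
move=> [Xproj Xcomp] Xf.
suff <- : pcomp_raw f (fun i x => Some (tnth x (s i))) = minor f s.
  by apply: Xcomp => // i; apply: (Xproj _ (s i)).
apply: functional_extensionality => x; rewrite /pcomp_raw.
have -> : [forall i, Some (tnth x (s i)) != None] by apply/forallP.
by congr f; apply: eq_from_tnth => i; rewrite !(tnth_map, tnth_ord_tuple).
Qed.

(* [star f g] is the composition of [f] with [g] and projections. *)
Lemma partial_clone_star X F G : partial_clone X -> X F -> X G -> X (star F G).
Proof.
case: F G => n f [m g] cloneX Xf Xg.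
pose h (i : 'I_n.+1) := if val i == 0 then minor g (fun i : 'I_m.+1 => inord i)
  else fun x : (n + m).+1.-tuple A => Some (tnth x (inord (m + i))).
suff -> : star (PFun f) (PFun g) = PFun (pcomp_raw f h).
  apply: (proj2 cloneX) => // i; rewrite /h; case: ifP => _.
    exact: partial_clone_minor.
  exact: (proj1 cloneX).
congr PFun; apply: functional_extensionality => x; rewrite /pcomp_raw /=.
have h0 : h ord0 x = g [tuple tnth x (inord i) | i < m.+1] by [].
case eg: (g _) => [y|]; last first.
  by case: forallP => // /(_ ord0); rewrite h0 eg.
case: forallP => [_|[]]; last by move=> i; rewrite /h; case: ifP => // _; rewrite /minor eg.
congr f; apply: eq_from_tnth => i; rewrite !(tnth_map, tnth_ord_tuple) /h.
by case: ifP => // _; rewrite /minor eg.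
Qed.

Lemma partial_clone_class X : partial_clone X -> partial_class X.
Proof.
move=> cloneX; split; first by move=> F G; apply: partial_clone_star.
split; first by move=> [n f]; apply: (partial_clone_minor (@ordS n.+1) cloneX).
split; first by move=> [n f]; apply: (partial_clone_minor (@tau_idx n) cloneX).
split; first by move=> [n f]; apply: (partial_clone_minor (lift (@ord0 n.+1)) cloneX).
move=> [[|n] f] // Xf.
exact: (partial_clone_minor (fun i : 'I_n.+2 => inord i.-1 : 'I_n.+1) cloneX).
Qed.

Lemma partial_class_clone X : partial_class X -> (forall n (i : 'I_n.+1), X (proj A i)) ->
  partial_clone X.
Proof. by move=> classX Xproj; split=> // n m f g; apply: partial_class_pcomp. Qed.

Lemma partial_cloneI X Y : partial_clone X -> partial_clone Y ->
  partial_clone (fun F => X F /\ Y F).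
Proof.
move=> [Xproj Xcomp] [Yproj Ycomp]; split=> [n i|n m f g [Xf Yf] XYg]; first by split.
by split; [apply: Xcomp | apply: Ycomp] => // i; case: (XYg i).
Qed.

Lemma Istr_restrict (C D U X : pset A) :
  (forall F, D F -> ptotal F) -> (forall F, D F -> C F) ->
  partial_clone U -> strong U -> (forall F, D F -> U F) ->
  (forall F, U F -> ptotal F -> D F) ->
  Istr C X -> Istr D (fun F => X F /\ U F).
Proof.
move=> totD DC cloneU strong_U DU UD [cloneX [strongX totX]].
split; first exact: partial_cloneI.
split; first exact: strongI.
apply: pset_ext => F; split=> [[[_ UF] totF]|DF]; first exact: UD.
have XF : X F by have : C F := DC F DF; rewrite -totX => -[].
by split; [split; [|apply: DU] | apply: totD].
Qed.

End StrongClasses.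

Theorem mainTheorem11 (A : finType) (C D T : pset A) (I : pset A -> Prop) :
  total_clone C -> total_clone D -> (forall f, D f -> C f) ->
  strong_partial_class T ->
  (forall X, I X -> Istr C X) ->
  (forall f, T f -> ptotal f -> D f) ->
  (forall f g, T f -> Str D g -> Str D (star f g) \/ T (star f g)) ->
  (forall f g, Str D f -> T g -> Str D (star f g) \/ T (star f g)) ->
  (forall X Y, I X -> I Y -> X <> Y ->
     (fun f => X f /\ T f) <> (fun f => Y f /\ T f)) ->
  card_ge (Istr D) I.
Proof.
move=> _ cloneD DC [classT strongT] IC TD TstarD DstarT sepI.
pose U F := Str D F \/ T F.
have classU : partial_class U.
  have classStrD := Str_class (partial_clone_class (proj1 cloneD)).
  exact: (partial_classU classStrD classT DstarT TstarD).
have cloneU : partial_clone U.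
  by apply: partial_class_clone => // n i; left; apply/Str_sub/(proj1 (proj1 cloneD)).
have DU F : D F -> U F by left; apply: Str_sub.
have UD F : U F -> ptotal F -> D F.
  by move=> [[G DG le_FG]|TF] totF; [rewrite -(ple_total le_FG totF) | apply: TD].
exists (fun X F => X F /\ U F); split=> [X IX|X Y IX IY eXY].
  have strong_U : strong U := strongU (strong_Str D) strongT.
  exact: Istr_restrict (proj2 cloneD) DC cloneU strong_U DU UD (IC X IX).
apply: NNPP => neXY; apply: (sepI X Y IX IY neXY); apply: pset_ext => F.
have /= eF := congr1 (fun Z => Z F) eXY.
split=> -[ZF TF]; split=> //.
  by have [] : Y F /\ U F by rewrite -eF; split=> //; right.
by have [] : X F /\ U F by rewrite eF; split=> //; right.
Qed.
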